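(* Let $K$ be an algebraically closed field of characteristic $2$ and let $X=\{a_1\sigma_1^4+a_2\sigma_1^2\sigma_2+a_3\sigma_1\sigma_3+a_4\sigma_4+\beta\sigma_2^2=0\}\subset\mathbb{P}^3_K$ be a normal symmetric quartic. Then no singular point of $X$ has four pairwise distinct coordinates. Moreover, up to permutation of coordinates: - $(0,0,1,1)\in\mathrm{Sing}(X)$ iff $\beta=0$; - $(0,0,0,1)\in\mathrm{Sing}(X)$ iff $a_1=a_2=0$; - for $b\neq1$: $(1,1,1,b)\in\mathrm{Sing}(X)$ iff $a_4=a_2(1+b)^2$ and $\beta=a_1(1+b)^2+a_2+a_3$; - $(1,1,1,1)\in\mathrm{Sing}(X)$ iff $a_4=0$; - for $b\neq0,1$: $(0,0,1,b)\in\mathrm{Sing}(X)$ iff $a_2=a_3=0$ and $a_1(1+b)^4+\beta b^2=0$; - for $z\neq0,1$: $(0,1,1,z)\in\mathrm{Sing}(X)$ iff $a_3=za_2$, $a_4=z^2a_2$ and $\beta=a_1z^4+a_2z^2(1+z)$; - for $b,c\notin\{0,1\}$ with $b\neq c$, setting $z=b+c$: $(1,1,b,c)\in\mathrm{Sing}(X)$ iff $a_3=za_2$, $a_4=z^2a_2$ and $\beta(1+bc)^2+a_1z^4+a_2z^2(1+z)=0$. *)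

From HB Require Import structures.
From mathcomp Require Import all_boot all_order all_algebra.
From mathcomp Require Import mpoly.
Set Implicit Arguments. Unset Strict Implicit. Unset Printing Implicit Defensive.
Import GRing.Theory.
Local Open Scope ring_scope.

Definition symquartic (K : fieldType) (a1 a2 a3 a4 beta : K) : {mpoly K[4]} :=
  a1 *: (mesym 4 K 1) ^+ 4
  + a2 *: ((mesym 4 K 1) ^+ 2 * mesym 4 K 2)
  + a3 *: (mesym 4 K 1 * mesym 4 K 3)
  + a4 *: mesym 4 K 4
  + beta *: (mesym 4 K 2) ^+ 2.

(* A (representative in K^4 of a) point of P^3: a nonzero vector. *)
Definition nonzero_pt (K : fieldType) (v : {ffun 'I_4 -> K}) : Prop :=
  exists i, v i != 0.

Definition sing_pt (K : fieldType) (F : {mpoly K[4]}) (v : {ffun 'I_4 -> K}) : Prop :=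
  nonzero_pt v /\ F.@[v] = 0 /\ forall i : 'I_4, (F^`M(i)).@[v] = 0.

(* Normality of the quartic surface {F = 0} in P^3: for a hypersurface
   (Cohen-Macaulay, so S2 holds) normality is equivalent to R1, i.e. to the
   singular locus being finite (a finite set of points of P^3). *)
Definition normal_surface (K : fieldType) (F : {mpoly K[4]}) : Prop :=
  exists s : seq {ffun 'I_4 -> K},
    forall v, sing_pt F v -> exists2 w, w \in s & exists c : K, forall i, v i = c * w i.

Definition pt4 (K : fieldType) (x0 x1 x2 x3 : K) : {ffun 'I_4 -> K} :=
  [ffun i : 'I_4 => nth 0 [:: x0; x1; x2; x3] i].

From HB Require Import structures.
From mathcomp Require Import all_boot all_order all_algebra.
From mathcomp Require Import perm mpoly.
From mathcomp Require Import ring.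
Import GRing.Theory.
Local Open Scope ring_scope.
Set Implicit Arguments. Unset Strict Implicit. Unset Printing Implicit Defensive.

(* In characteristic 2 the partial derivatives of F at v are the values at the
   coordinates of v of a single cubic [polar], whose coefficients only depend
   on the elementary symmetric values s1, s2, s3 of v. If the four coordinates
   were distinct, this cubic would vanish identically, forcing a4 = 0 and
   a3 s1 = 0. When moreover a3 = 0 or beta = 0, the surface is singular along
   a curve (s1 = s2 = 0, resp. s1 = s3 = 0), which a normal surface is not;
   otherwise s1 = s2 = s3 = 0, so all coordinates have the same fourth power
   and, Frobenius being injective, coincide. Each listed point has a repeated
   coordinate, and for a point (u, u, x, y) the singularity conditions are
   explicit polynomial conditions in u, x, y, which specialize to the stated
   ones. *)

Lemma mderiv_sqr_pchar2 n (R : comNzRingType) (i : 'I_n) (p : {mpoly R[n]}) :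
  2 \in [pchar R] -> (p ^+ 2)^`M(i) = 0.
Proof.
move=> char2; rewrite mderivM [p * _]mulrC -mulr2n -mulr_natr -mpolyC_nat.
by rewrite (pcharf0 char2) mpolyC0 mulr0.
Qed.

Lemma meval_msym n (R : comNzRingType) (s : 'S_n) (p : {mpoly R[n]}) v :
  (msym s p).@[v] = p.@[fun i => v (s i)].
Proof.
rewrite [RHS]mevalE /msym /mmap raddf_sum; apply: eq_bigr => m _.
rewrite /= mevalM mevalC /mmap1 rmorph_prod; congr (_ * _).
by apply: eq_bigr => i _; rewrite rmorphXn /= mevalXU.
Qed.

Lemma Poly_coef_eq0 (R : idomainType) (s rs : seq R) :
  uniq rs -> (size s <= size rs)%N -> all (root (Poly s)) rs -> forall i, s`_i = 0.
Proof.
move=> urs le_s_rs rootsP i; rewrite -coef_Poly.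
have [->|nz_p] := eqVneq (Poly s) 0; first by rewrite coef0.
have := max_poly_roots nz_p rootsP urs.
by rewrite ltnNge (leq_trans (size_Poly s) le_s_rs).
Qed.

Lemma closed_field_infinite (K : closedFieldType) (s : seq K) : exists t, t \notin s.
Proof.
pose p := (\prod_(a <- s) ('X - a%:P)) * 'X + 1.
have : size p != 1 by rewrite size_MXaddC oner_eq0 andbF size_prod_XsubC.
case/closed_rootP => t; rewrite /root hornerMXaddC => /eqP pt0; exists t.
apply/negP; rewrite -root_prod_XsubC => /rootP ps0.
by move: pt0; rewrite ps0 mul0r add0r => /eqP; rewrite oner_eq0.
Qed.

Section Pchar2.
Variable R : idomainType.
Hypothesis char2 : 2 \in [pchar R].
Implicit Types x y w : R.

Lemma eq_pchar2 x y w : x = y + w *+ 2 -> x = y.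
Proof. by rewrite mulrn_pchar // addr0. Qed.

Lemma addr_eq0_pchar2 x y : (x + y == 0) = (x == y).
Proof. by rewrite addr_eq0 oppr_pchar2. Qed.

Lemma sqrf_inj_pchar2 x y : x ^+ 2 = y ^+ 2 -> x = y.
Proof.
move=> sqr_xy; apply/eqP; rewrite -addr_eq0_pchar2 -sqrf_eq0 sqrrD.
by rewrite sqr_xy mulrn_pchar // addr0 addrr_pchar2.
Qed.

Lemma expr4_inj_pchar2 x y : x ^+ 4 = y ^+ 4 -> x = y.
Proof. by rewrite -[4%N]/(2 * 2)%N !exprM => /sqrf_inj_pchar2/sqrf_inj_pchar2; apply. Qed.
End Pchar2.

Notation ord4 k := (@Ordinal 4 k isT).

Lemma forall_ord4 (P : 'I_4 -> Prop) :
  (forall i, P i) <-> [/\ P (ord4 0), P (ord4 1), P (ord4 2) & P (ord4 3)].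
Proof.
split=> [Pi|[P0 P1 P2 P3] [[|[|[|[|//]]]] lt_i4]]; first by split; apply: Pi.
all: by rewrite (bool_irrelevance lt_i4 isT).
Qed.

Section ElementarySymmetric4.
Variable R : comNzRingType.
Local Notation "''s_' k" := (mesym 4 R k) (at level 8, k at level 2, format "''s_' k").
Local Notation "''x_' k" := ('X_(ord4 k) : {mpoly R[4]})
  (at level 8, k at level 2, format "''x_' k").

Lemma mwidenXU n (i : 'I_n) :
  mwiden ('X_i : {mpoly R[n]}) = 'X_(widen_ord (leqnSn n) i).
Proof. by rewrite mwidenX mnmwiden1. Qed.

Lemma mesym4E :
  [/\ 's_1 = 'x_0 + 'x_1 + 'x_2 + 'x_3,
      's_2 = 'x_0 * 'x_1 + 'x_0 * 'x_2 + 'x_0 * 'x_3 + 'x_1 * 'x_2 + 'x_1 * 'x_3 + 'x_2 * 'x_3,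
      's_3 = 'x_0 * 'x_1 * 'x_2 + 'x_0 * 'x_1 * 'x_3 + 'x_0 * 'x_2 * 'x_3 + 'x_1 * 'x_2 * 'x_3
    & 's_4 = 'x_0 * 'x_1 * 'x_2 * 'x_3].
Proof.
have e0 : widen_ord (leqnSn 3) (widen_ord (leqnSn 2) (widen_ord (leqnSn 1) ord_max))
  = ord4 0 by exact: val_inj.
have e1 : widen_ord (leqnSn 3) (widen_ord (leqnSn 2) ord_max) = ord4 1 by exact: val_inj.
have e2 : widen_ord (leqnSn 3) ord_max = ord4 2 by exact: val_inj.
have e3 : ord_max = ord4 3 by exact: val_inj.
split.
- rewrite mesym1E !big_ord_recr big_ord0 /= add0r.
  by congr (_ + _ + _ + _); congr 'X_ _; apply/val_inj.
- rewrite (mesymSS R 3 1) (mesymSS R 2 1) (mesymSS R 1 1) mesym_geqnE // !mesym1E.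
  rewrite !big_ord_recr !big_ord0 /= !(mwiden0, mwidenD, mwidenM, mwidenXU, add0r, mul0r).
  by rewrite e0 e1 e2 e3; ring.
- rewrite (mesymSS R 3 2) (mesymSS R 2 2) (mesymSS R 2 1) (mesymSS R 1 1) (mesymSS R 1 2).
  rewrite !mesym1E (@mesym_geqnE 1 R 2) // (@mesym_geqnE 1 R 3) // !big_ord_recr !big_ord0 /=.
  rewrite !(mwiden0, mwidenD, mwidenM, mwidenXU, add0r, mul0r).
  by rewrite e0 e1 e2 e3; ring.
- rewrite mesymnnE !big_ord_recr big_ord0 /= mul1r.
  by congr (_ * _ * _ * _); congr 'X_ _; apply/val_inj.
Qed.

Lemma mderivXU n (i j : 'I_n) : ('X_j : {mpoly R[n]})^`M(i) = (j == i)%:R.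
Proof.
rewrite mderivX mnm1E; case: eqP => [->|_]; last by rewrite scale0r.
rewrite (_ : (U_(i) - U_(i) = 0)%MM) ?mpolyX0 ?scale1r //.
by apply/mnmP => k; rewrite mnmBE mnm0E subnn.
Qed.

Lemma mderiv_mesym4 (i : 'I_4) : let x := 'X_i in
  [/\ 's_1^`M(i) = 1, 's_2^`M(i) = 's_1 - x, 's_3^`M(i) = 's_2 - x * ('s_1 - x)
    & 's_4^`M(i) = 's_3 - x * ('s_2 - x * ('s_1 - x))].
Proof.
have [-> -> -> ->] := mesym4E; rewrite !(mderivD, mderivM, mderivXU).
by case: i => [[|[|[|[|//]]]] lt_i4]; rewrite (bool_irrelevance lt_i4 isT) /=; split; ring.
Qed.

Lemma meval_mesym4 (v : 'I_4 -> R) :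
  [/\ ('s_1).@[v] = v (ord4 0) + v (ord4 1) + v (ord4 2) + v (ord4 3),
      ('s_2).@[v] = v (ord4 0) * v (ord4 1) + v (ord4 0) * v (ord4 2) + v (ord4 0) * v (ord4 3)
                    + v (ord4 1) * v (ord4 2) + v (ord4 1) * v (ord4 3) + v (ord4 2) * v (ord4 3),
      ('s_3).@[v] = v (ord4 0) * v (ord4 1) * v (ord4 2) + v (ord4 0) * v (ord4 1) * v (ord4 3)
                    + v (ord4 0) * v (ord4 2) * v (ord4 3) + v (ord4 1) * v (ord4 2) * v (ord4 3)
    & ('s_4).@[v] = v (ord4 0) * v (ord4 1) * v (ord4 2) * v (ord4 3)].
Proof. by have [-> -> -> ->] := mesym4E; rewrite !(mevalD, mevalM, mevalXU). Qed.

Lemma mesym4_root (v : 'I_4 -> R) i :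
  v i ^+ 4 - ('s_1).@[v] * v i ^+ 3 + ('s_2).@[v] * v i ^+ 2 - ('s_3).@[v] * v i + ('s_4).@[v] = 0.
Proof.
have [-> -> -> ->] := meval_mesym4 v.
by case: i => [[|[|[|[|//]]]] lt_i4]; rewrite (bool_irrelevance lt_i4 isT); ring.
Qed.

Lemma meval_mesym_perm k (s : 'S_4) (v : 'I_4 -> R) :
  ('s_k).@[fun i => v (s i)] = ('s_k).@[v].
Proof. by rewrite -meval_msym (issymP _ (mesym_sym _ _ _)). Qed.
End ElementarySymmetric4.

Lemma normal_surface_avoids_slope (K : closedFieldType) (G : {mpoly K[4]}) :
  normal_surface G ->
  exists t, forall v, sing_pt G v -> v (ord4 0) = 1 -> v (ord4 1) != t.
Proof.
case=> s sing_s.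
have [t t_notin] :=
  closed_field_infinite [seq w (ord4 1) / w (ord4 0) | w : {ffun 'I_4 -> K} <- s].
exists t => v /sing_s[w w_s [c vE]] v0; apply: contraNneq t_notin => v1.
have w0 : w (ord4 0) != 0.
  apply: contraTneq isT => w0.
  by move: v0; rewrite vE w0 mulr0 => /eqP; rewrite eq_sym oner_eq0.
apply/mapP; exists w => //; apply: (mulIf w0).
by rewrite divfK // -v1 vE mulrAC -vE v0 mul1r.
Qed.

Section SymmetricQuartic.
Variables (K : fieldType) (a1 a2 a3 a4 beta : K).
Local Notation F := (symquartic a1 a2 a3 a4 beta).
Local Notation es k v := (mesym 4 K k).@[v].

Definition quartic (s1 s2 s3 s4 : K) :=
  a1 * s1 ^+ 4 + a2 * (s1 ^+ 2 * s2) + a3 * (s1 * s3) + a4 * s4 + beta * s2 ^+ 2.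

Lemma meval_symquartic v : F.@[v] = quartic (es 1 v) (es 2 v) (es 3 v) (es 4 v).
Proof. by rewrite /symquartic !(mevalD, mevalZ, mevalM, rmorphXn). Qed.

(* s1 + t, s2 + t (s1 + t) and s3 + t (s2 + t (s1 + t)) are the elementary
   symmetric functions of the three coordinates other than t, that is, the
   partial derivatives of s2, s3 and s4 (signs vanish in characteristic 2). *)
Definition polar (s1 s2 s3 t : K) :=
  a2 * (s1 ^+ 2 * (s1 + t)) + a3 * (s3 + s1 * (s2 + t * (s1 + t)))
  + a4 * (s3 + t * (s2 + t * (s1 + t))).

Hypothesis char2 : 2 \in [pchar K].

Lemma meval_mderiv_symquartic v i :
  (F^`M(i)).@[v] = polar (es 1 v) (es 2 v) (es 3 v) (v i).
Proof.
have [d1 d2 d3 d4] := mderiv_mesym4 K i.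
have dsqr0 (p : {mpoly K[4]}) : (p ^+ 2)^`M(i) = 0 := mderiv_sqr_pchar2 i p char2.
rewrite /symquartic [mesym 4 K 1 ^+ 4](exprM _ 2 2) !(mderivD, mderivZ).
rewrite !dsqr0 mderivM dsqr0 mderivM d1 d2 d3 d4.
rewrite !(mevalD, mevalB, mevalN, mevalZ, mevalM, rmorphXn, meval0, meval1, mevalXU).
by rewrite !(oppr_pchar2 char2) /polar; ring.
Qed.

Lemma sing_ptE v : sing_pt F v <->
  [/\ nonzero_pt v, quartic (es 1 v) (es 2 v) (es 3 v) (es 4 v) = 0
    & forall i, polar (es 1 v) (es 2 v) (es 3 v) (v i) = 0].
Proof.
rewrite /sing_pt meval_symquartic.
split=> [[nz_v [Fv0 dFv0]]|[nz_v Fv0 dFv0]].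
  by split=> // i; rewrite -meval_mderiv_symquartic.
by do 2!split=> //; move=> i; rewrite meval_mderiv_symquartic.
Qed.

Lemma sing_pt_perm (s : 'S_4) (v : {ffun 'I_4 -> K}) :
  sing_pt F [ffun i => v (s i)] <-> sing_pt F v.
Proof.
have esE k : es k [ffun i => v (s i)] = es k v.
  by rewrite -(meval_mesym_perm k s v); apply: meval_eq => i; rewrite ffunE.
rewrite !sing_ptE !esE; split=> -[[j nz_vj] Fv0 dFv0].
  split=> [|//|i]; first by exists (s j); rewrite ffunE in nz_vj.
  by rewrite -(permKV s i); move: (dFv0 (s^-1 i)%g); rewrite ffunE.
split=> [|//|i]; first by exists (s^-1 j)%g; rewrite ffunE permKV.
by rewrite ffunE.
Qed.

Lemma polar_pair_repeated u x y :
  polar (x + y) (u ^+ 2 + x * y) (u ^+ 2 * (x + y)) u =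
  a2 * ((x + y) ^+ 2 * (x + y + u)) + a3 * ((x + y) * ((u + x) * (u + y)))
  + a4 * (u * (x * y)).
Proof.
apply: (eq_pchar2 char2 (w := u ^+ 2 * (a3 * (x + y) + a4 * (x + y + u)))).
by rewrite /polar; ring.
Qed.

Lemma polar_pair_single u x y :
  polar (x + y) (u ^+ 2 + x * y) (u ^+ 2 * (x + y)) x =
  y * (a2 * (x + y) ^+ 2 + a4 * u ^+ 2).
Proof.
pose w := a2 * (x + y) ^+ 2 * x + (a3 * (x + y) + a4 * x) * (u ^+ 2 + x * (x + y)).
apply: (eq_pchar2 char2 (w := w)).
by rewrite /polar /w; ring.
Qed.

Lemma sing_pt_pair u x y : sing_pt F (pt4 u u x y) <->
  [/\ nonzero_pt (pt4 u u x y),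
      quartic (x + y) (u ^+ 2 + x * y) (u ^+ 2 * (x + y)) (u ^+ 2 * (x * y)) = 0,
      a2 * ((x + y) ^+ 2 * (x + y + u)) + a3 * ((x + y) * ((u + x) * (u + y)))
        + a4 * (u * (x * y)) = 0,
      y * (a2 * (x + y) ^+ 2 + a4 * u ^+ 2) = 0
    & x * (a2 * (x + y) ^+ 2 + a4 * u ^+ 2) = 0].
Proof.
rewrite sing_ptE.
have [e1 e2 e3 e4] := meval_mesym4 (pt4 u u x y); rewrite !ffunE /= in e1 e2 e3 e4.
have -> : es 1 (pt4 u u x y) = x + y by rewrite e1 addrr_pchar2 // add0r.
have -> : es 2 (pt4 u u x y) = u ^+ 2 + x * y.
  by apply: (eq_pchar2 char2 (w := u * (x + y))); rewrite e2; ring.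
have -> : es 3 (pt4 u u x y) = u ^+ 2 * (x + y).
  by apply: (eq_pchar2 char2 (w := u * x * y)); rewrite e3; ring.
have -> : es 4 (pt4 u u x y) = u ^+ 2 * (x * y) by rewrite e4; ring.
have polar_y : polar (x + y) (u ^+ 2 + x * y) (u ^+ 2 * (x + y)) y =
    x * (a2 * (x + y) ^+ 2 + a4 * u ^+ 2).
  by rewrite (addrC x y) (mulrC x y) polar_pair_single.
split=> [[nz_v Fv0 /forall_ord4[]]|[nz_v Fv0 du dy dx]].
  rewrite !ffunE /= polar_pair_repeated polar_pair_single polar_y.
  by move=> du _ dy dx; split.
split=> //; apply/forall_ord4.
by rewrite !ffunE /= polar_pair_repeated polar_pair_single polar_y.
Qed.

Definition polar_coefs s1 s2 s3 : seq K :=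
  [:: a2 * s1 ^+ 3 + a3 * (s3 + s1 * s2) + a4 * s3; (a2 + a3) * s1 ^+ 2 + a4 * s2;
      (a3 + a4) * s1; a4].

Lemma polarE s1 s2 s3 t : polar s1 s2 s3 t = (Poly (polar_coefs s1 s2 s3)).[t].
Proof. by rewrite horner_Poly /= /polar; ring. Qed.

Lemma polar_coefs_eq0 s1 s2 s3 (v : 'I_4 -> K) :
  injective v -> (forall i, polar s1 s2 s3 (v i) = 0) ->
  forall k, (polar_coefs s1 s2 s3)`_k = 0.
Proof.
move=> v_inj v_roots; apply: (Poly_coef_eq0 (rs := [seq v i | i <- enum 'I_4])).
- by rewrite map_inj_uniq ?enum_uniq.
- by rewrite size_map size_enum_ord.
- by apply/allP => _ /mapP[i _ ->]; rewrite /root -polarE v_roots.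
Qed.

Local Notation simp := (expr0n, expr1n, mul0r, mulr0, mul1r, mulr1, add0r, addr0).

Lemma sing_pt_0011 : sing_pt F (pt4 0 0 1 1) <-> beta = 0.
Proof.
rewrite sing_pt_pair (addrr_pchar2 char2) /quartic !simp /=.
by split=> [[_ ->]|->] //; split=> //; exists (ord4 2); rewrite ffunE oner_neq0.
Qed.

Lemma sing_pt_0001 : sing_pt F (pt4 0 0 0 1) <-> a1 = 0 /\ a2 = 0.
Proof.
rewrite sing_pt_pair /quartic !simp /=.
by split=> [[_ -> ->]|[-> ->]] //; split=> //; exists (ord4 3); rewrite ffunE oner_neq0.
Qed.

Lemma sing_pt_1111 : sing_pt F (pt4 1 1 1 1) <-> a4 = 0.
Proof.
rewrite sing_pt_pair (addrr_pchar2 char2) /quartic !simp (addrr_pchar2 char2) !simp /=.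
by split=> [[_ ->]|->] //; split=> //; exists (ord4 0); rewrite ffunE oner_neq0.
Qed.

Lemma sing_pt_111b b : b != 1 ->
  sing_pt F (pt4 1 1 1 b) <-> a4 = a2 * (1 + b) ^+ 2 /\ beta = a1 * (1 + b) ^+ 2 + a2 + a3.
Proof.
move=> b_neq1; have nz_b1 : 1 + b != 0 by rewrite addr_eq0_pchar2 // eq_sym.
rewrite sing_pt_pair /quartic !simp.
set q := (X in [/\ _, X = 0, _, _ & _]); set d := (X in [/\ _, _, X = 0, _ & _]).
set c := a2 * (1 + b) ^+ 2 + a4.
have -> : q = (1 + b) ^+ 2 * (a1 * (1 + b) ^+ 2 + a2 + a3 + beta) + b * c.
  by rewrite /q /c; ring.
have -> : d = b * c.
  by apply: (eq_pchar2 char2 (w := (a2 + a3) * (1 + b) ^+ 2)); rewrite /d /c; ring.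
split=> [[_ + _ _ c0]|[a4E betaE]].
  rewrite c0 mulr0 addr0 => /eqP; rewrite mulf_eq0 expf_eq0 (negbTE nz_b1) andbF /=.
  by rewrite addr_eq0_pchar2 // => /eqP ->; move/eqP: c0; rewrite addr_eq0_pchar2 // => /eqP ->.
have c0 : c = 0 by rewrite /c a4E addrr_pchar2.
rewrite c0 betaE addrr_pchar2 // !mulr0 addr0; split=> //.
by exists (ord4 0); rewrite ffunE oner_neq0.
Qed.

Lemma sing_pt_001b b : b != 0 -> b != 1 ->
  sing_pt F (pt4 0 0 1 b) <-> a2 = 0 /\ a3 = 0 /\ a1 * (1 + b) ^+ 4 + beta * b ^+ 2 = 0.
Proof.
move=> nz_b b_neq1; have nz_b1 : 1 + b != 0 by rewrite addr_eq0_pchar2 // eq_sym.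
rewrite sing_pt_pair /quartic !simp.
split=> [[_ q0 d _ /eqP]|[a2E [a3E q0]]].
  rewrite mulf_eq0 expf_eq0 (negbTE nz_b1) andbF orbF => /eqP a2E.
  move/eqP: d; rewrite a2E mul0r add0r !mulf_eq0 (negbTE nz_b1) (negbTE nz_b) !orbF.
  by move=> /eqP a3E; move: q0; rewrite a2E mul0r addr0.
rewrite a2E a3E !(mul0r, mulr0, addr0) q0; split=> //.
by exists (ord4 2); rewrite ffunE oner_neq0.
Qed.

Lemma sing_pt_110z z : z != 0 -> z != 1 ->
  sing_pt F (pt4 1 1 0 z) <->
  a3 = z * a2 /\ a4 = z ^+ 2 * a2 /\ beta = a1 * z ^+ 4 + a2 * z ^+ 2 * (1 + z).
Proof.
move=> nz_z z_neq1; have nz_z1 : 1 + z != 0 by rewrite addr_eq0_pchar2 // eq_sym.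
rewrite sing_pt_pair /quartic !simp.
have -> : a2 * (z ^+ 2 * (z + 1)) + a3 * (z * (1 + z)) = z * (1 + z) * (a3 + z * a2) by ring.
split=> [[_ q0 d /eqP + _]|[a3E [a4E betaE]]].
  rewrite mulf_eq0 (negbTE nz_z) addr_eq0_pchar2 // => /eqP a4E.
  move/eqP: d; rewrite !mulf_eq0 (negbTE nz_z) (negbTE nz_z1) addr_eq0_pchar2 // => /eqP a3E.
  split=> //; split; first by rewrite -a4E mulrC.
  apply/eqP; rewrite eq_sym -addr_eq0_pchar2 //; apply/eqP.
  by rewrite -q0 a3E; ring.
rewrite a3E a4E betaE [z ^+ 2 * a2]mulrC !(addrr_pchar2 char2) !mulr0; split=> //.
  by exists (ord4 0); rewrite ffunE oner_neq0.
by apply: (eq_pchar2 char2 (w := a1 * z ^+ 4 + a2 * z ^+ 2 * (1 + z))); ring.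
Qed.

Lemma sing_pt_011z z : z != 0 -> z != 1 ->
  sing_pt F (pt4 0 1 1 z) <->
  a3 = z * a2 /\ a4 = z ^+ 2 * a2 /\ beta = a1 * z ^+ 4 + a2 * z ^+ 2 * (1 + z).
Proof.
move=> nz_z z_neq1; rewrite -sing_pt_110z //.
have -> : pt4 0 1 1 z = [ffun i => pt4 1 1 0 z (tperm (ord4 0) (ord4 2) i)].
  by apply/ffunP => -[[|[|[|[|//]]]] lt_i4]; rewrite !ffunE permE.
exact: sing_pt_perm.
Qed.

Lemma sing_pt_11bc b c : b != 0 -> b != 1 -> c != 0 -> c != 1 -> b != c ->
  sing_pt F (pt4 1 1 b c) <->
  a3 = (b + c) * a2 /\ a4 = (b + c) ^+ 2 * a2 /\
  beta * (1 + b * c) ^+ 2 + a1 * (b + c) ^+ 4 + a2 * (b + c) ^+ 2 * (1 + (b + c)) = 0.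
Proof.
move=> nz_b b_neq1 nz_c c_neq1 b_neq_c.
have nz_b1 : 1 + b != 0 by rewrite addr_eq0_pchar2 // eq_sym.
have nz_c1 : 1 + c != 0 by rewrite addr_eq0_pchar2 // eq_sym.
have nz_bc : b + c != 0 by rewrite addr_eq0_pchar2.
rewrite sing_pt_pair /quartic !simp.
split=> [[_ q0 d _ /eqP]|[a3E [a4E q0]]].
  rewrite mulf_eq0 (negbTE nz_b) addr_eq0_pchar2 // => /eqP a4E.
  move/eqP: d; rewrite -a4E.
  have -> : a2 * ((b + c) ^+ 2 * (b + c + 1)) + a3 * ((b + c) * ((1 + b) * (1 + c)))
      + a2 * (b + c) ^+ 2 * (b * c) = (b + c) * ((1 + b) * (1 + c)) * (a3 + (b + c) * a2).
    by ring.
  rewrite !mulf_eq0 (negbTE nz_bc) (negbTE nz_b1) (negbTE nz_c1) addr_eq0_pchar2 //.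
  move=> /eqP a3E; split=> //; split; first by rewrite mulrC.
  rewrite -q0 -a4E a3E; apply/esym/(eq_pchar2 char2 (w := a2 * (b + c) ^+ 2 * (b * c))).
  by ring.
rewrite a3E a4E [(b + c) ^+ 2 * a2]mulrC !(addrr_pchar2 char2) !mulr0; split=> //.
- by exists (ord4 0); rewrite ffunE oner_neq0.
- rewrite -q0; apply: (eq_pchar2 char2 (w := a2 * (b + c) ^+ 2 * (b * c))); ring.
- apply: (eq_pchar2 char2 (w := a2 * (b + c) ^+ 2 * (1 + (b + c) + b * c))); ring.
Qed.

Lemma sing_pts_a4beta_eq0 t : a4 = 0 -> beta = 0 ->
  exists2 v, sing_pt F v & v (ord4 0) = 1 /\ v (ord4 1) = t.
Proof.
move=> a4_0 beta_0; exists (pt4 1 t 1 t); last by rewrite !ffunE.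
have [e1 _ e3 _] := meval_mesym4 (pt4 1 t 1 t); rewrite !ffunE /= in e1 e3.
have {}e1 : es 1 (pt4 1 t 1 t) = 0 by rewrite e1; apply: (eq_pchar2 char2 (w := 1 + t)); ring.
have {}e3 : es 3 (pt4 1 t 1 t) = 0 by rewrite e3; apply: (eq_pchar2 char2 (w := t + t ^+ 2)); ring.
rewrite sing_ptE e1 e3 /quartic /polar a4_0 beta_0; split=> [||i]; try ring.
by exists (ord4 0); rewrite ffunE oner_neq0.
Qed.

End SymmetricQuartic.

Section ClosedField.
Variables (K : closedFieldType) (a1 a2 a3 a4 beta : K).
Hypothesis char2 : 2 \in [pchar K].
Local Notation F := (symquartic a1 a2 a3 a4 beta).
Local Notation es k v := (mesym 4 K k).@[v].

Lemma sing_pts_a3a4_eq0 t : a3 = 0 -> a4 = 0 ->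
  exists2 v, sing_pt F v & v (ord4 0) = 1 /\ v (ord4 1) = t.
Proof.
move=> a3_0 a4_0.
have [u uE] : exists u : K, u ^+ 2 = (1 + t) * u + (1 + t + t ^+ 2).
  have [u] := @solve_monicpoly K 2 (nth 0 [:: 1 + t + t ^+ 2; 1 + t]) isT.
  by rewrite !big_ord_recl big_ord0 /= /bump /= expr0 expr1 mulr1 addr0 addrC; exists u.
exists (pt4 1 t u (1 + t + u)); last by rewrite !ffunE.
have [e1 e2 _ _] := meval_mesym4 (pt4 1 t u (1 + t + u)); rewrite !ffunE /= in e1 e2.
have {}e1 : es 1 (pt4 1 t u (1 + t + u)) = 0 by rewrite e1 addrr_pchar2.
have {}e2 : es 2 (pt4 1 t u (1 + t + u)) = 0.
  rewrite e2; apply: (eq_pchar2 char2 (w := 1 + t ^+ 2 + (t + u + t * u) *+ 2)).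
  by ring: uE.
rewrite sing_ptE // e1 e2 /quartic /polar a3_0 a4_0; split=> [||i]; try ring.
by exists (ord4 0); rewrite ffunE oner_neq0.
Qed.

Lemma sing_pt_coords_not_distinct : normal_surface F ->
  forall v, sing_pt F v -> ~ (forall i j : 'I_4, i != j -> v i != v j).
Proof.
move=> normalF v sing_v v_neq.
have [_ Fv0 dFv0] := (sing_ptE a1 a2 a3 a4 beta char2 v).1 sing_v.
have v_inj : injective v by move=> i j /eqP; apply: contraTeq => /v_neq.
have [t no_t] := normal_surface_avoids_slope normalF.
have no_family : ~ exists2 w, sing_pt F w & w (ord4 0) = 1 /\ w (ord4 1) = t.
  by case=> w /no_t no_wt [/no_wt/eqP].
have coef k := polar_coefs_eq0 v_inj dFv0 k.
have a4_0 : a4 = 0 := coef 3%N.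
have c2 : (a3 + a4) * es 1 v = 0 := coef 2%N.
have c0 : a2 * es 1 v ^+ 3 + a3 * (es 3 v + es 1 v * es 2 v) + a4 * es 3 v = 0 := coef 0%N.
rewrite a4_0 addr0 in c2; rewrite a4_0 mul0r addr0 in c0.
have a3_nz : a3 != 0 by apply/eqP => a3_0; apply/no_family/sing_pts_a3a4_eq0.
have s1_0 : es 1 v = 0 by move/eqP: c2; rewrite mulf_eq0 (negbTE a3_nz) => /eqP.
have s3_0 : es 3 v = 0.
  have /eqP : a3 * es 3 v = 0 by rewrite -c0 s1_0; ring.
  by rewrite mulf_eq0 (negbTE a3_nz) => /eqP.
have beta_nz : beta != 0.
  by apply/eqP => beta_0; exact/no_family/(sing_pts_a4beta_eq0 a1 a2 a3 char2).
have s2_0 : es 2 v = 0.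
  have /eqP : beta * es 2 v ^+ 2 = 0 by rewrite -Fv0 /quartic s1_0 s3_0 a4_0; ring.
  by rewrite mulf_eq0 (negbTE beta_nz) sqrf_eq0 => /eqP.
have vE i : v i ^+ 4 = - es 4 v.
  by apply/eqP; rewrite -addr_eq0 -(mesym4_root v i) s1_0 s2_0 s3_0 !(mul0r, subr0, addr0).
have v01 := expr4_inj_pchar2 char2 (etrans (vE (ord4 0)) (esym (vE (ord4 1)))).
by move: (v_neq (ord4 0) (ord4 1) isT); rewrite v01 eqxx.
Qed.

End ClosedField.

Theorem proposition4p2 (K : closedFieldType) (a1 a2 a3 a4 beta : K) :
  2%N \in [pchar K] ->
  normal_surface (symquartic a1 a2 a3 a4 beta) ->
  let F := symquartic a1 a2 a3 a4 beta in
  (forall v : {ffun 'I_4 -> K}, sing_pt F v ->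
     ~ (forall i j : 'I_4, i != j -> v i != v j)) /\
  (sing_pt F (pt4 0 0 1 1) <-> beta = 0) /\
  (sing_pt F (pt4 0 0 0 1) <-> a1 = 0 /\ a2 = 0) /\
  (forall b : K, b != 1 ->
     (sing_pt F (pt4 1 1 1 b) <->
        a4 = a2 * (1 + b) ^+ 2 /\ beta = a1 * (1 + b) ^+ 2 + a2 + a3)) /\
  (sing_pt F (pt4 1 1 1 1) <-> a4 = 0) /\
  (forall b : K, b != 0 -> b != 1 ->
     (sing_pt F (pt4 0 0 1 b) <->
        a2 = 0 /\ a3 = 0 /\ a1 * (1 + b) ^+ 4 + beta * b ^+ 2 = 0)) /\
  (forall z : K, z != 0 -> z != 1 ->
     (sing_pt F (pt4 0 1 1 z) <->
        a3 = z * a2 /\ a4 = z ^+ 2 * a2 /\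
        beta = a1 * z ^+ 4 + a2 * z ^+ 2 * (1 + z))) /\
  (forall b c : K, b != 0 -> b != 1 -> c != 0 -> c != 1 -> b != c ->
     let z := b + c in
     (sing_pt F (pt4 1 1 b c) <->
        a3 = z * a2 /\ a4 = z ^+ 2 * a2 /\
        beta * (1 + b * c) ^+ 2 + a1 * z ^+ 4 + a2 * z ^+ 2 * (1 + z) = 0)).
Proof.
move=> char2 normalF F.
split; first exact: sing_pt_coords_not_distinct.
split; first exact: sing_pt_0011.
split; first exact: sing_pt_0001.
split; first by move=> b; apply: sing_pt_111b.
split; first exact: sing_pt_1111.
split; first by move=> b; apply: sing_pt_001b.
split; first by move=> z; apply: sing_pt_011z.
by move=> b c *; apply: sing_pt_11bc.
Qed.
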